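(* Let $r\ge 1$ and $q\ge 4$ be integers, and let $G$ be a minimal graph in $H_v(2_r;q-1)$. Then $$F_v(2_r;q-1)\ge F_v(2_r;q)+\alpha(G)-1.$$
   Context: All graphs are finite, simple and undirected. $\mathrm{cl}(G)$ is the clique number and $\alpha(G)$ the independence number of $G$. $G\overset{v}{\to}(2_r)$ means that in every partition of $V(G)$ into $r$ pairwise disjoint parts some part contains an edge (equivalently $\chi(G)\ge r+1$). $H_v(2_r;q)$ is the set of graphs $G$ with $G\overset{v}{\to}(2_r)$ and $\mathrm{cl}(G)<q$; $F_v(2_r;q)=\min\{|V(G)|:G\in H_v(2_r;q)\}$ (which exists iff $q\ge 3$). A graph $G_0$ in a nonempty set $\mathcal M$ of graphs is minimal in $\mathcal M$ if $|V(G_0)|=\min\{|V(G)|:G\in\mathcal M\}$. *)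

From mathcomp Require Import all_boot.
From Stdlib Require Import ClassicalEpsilon.
Set Implicit Arguments. Unset Strict Implicit. Unset Printing Implicit Defensive.

Definition simple_graph (T : finType) (e : rel T) : Prop :=
  symmetric e /\ irreflexive e.

Definition is_clique (T : finType) (e : rel T) (A : {set T}) : bool :=
  [forall x in A, forall y in A, (x != y) ==> e x y].

Definition is_indep (T : finType) (e : rel T) (A : {set T}) : bool :=
  [forall x in A, forall y in A, ~~ e x y].

Definition clique_number (T : finType) (e : rel T) : nat :=
  \max_(A : {set T} | is_clique e A) #|A|.

Definition alpha (T : finType) (e : rel T) : nat :=
  \max_(A : {set T} | is_indep e A) #|A|.

(* G -v-> (2_r): for every partition of V(G) into r (possibly empty)
   pairwise disjoint parts, encoded by a part-assignment f : T -> 'I_r,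
   some part contains an edge. *)
Definition varrow (r : nat) (T : finType) (e : rel T) : Prop :=
  forall f : T -> 'I_r, exists x y, e x y /\ f x = f y.

Definition inHv (r q : nat) (T : finType) (e : rel T) : Prop :=
  simple_graph e /\ varrow r e /\ clique_number e < q.

Definition hasHv (r q n : nat) : Prop :=
  exists e : rel 'I_n, inHv r q e.

Definition hasHvb (r q : nat) : pred nat :=
  fun n => if excluded_middle_informative (hasHv r q n) then true else false.

(* F_v(2_r; q) = min number of vertices of a graph in H_v(2_r; q)
   (set to 0 by convention when H_v(2_r; q) is empty, i.e. q <= 2). *)
Definition Fv (r q : nat) : nat :=
  match excluded_middle_informative (exists n, hasHvb r q n) with
  | left h => ex_minn h
  | right _ => 0
  end.

From mathcomp Require Import all_boot.
From Stdlib Require Import ClassicalEpsilon.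
Set Implicit Arguments. Unset Strict Implicit. Unset Printing Implicit Defensive.

(* Let G be minimal in H_v(2_r; q-1) and A a maximum
   independent set of G, so |A| = alpha(G).  Delete A and add one new vertex
   adjacent to every remaining vertex: the resulting graph G' is the cone over
   G - A.  Then
   - cl(G') <= cl(G - A) + 1 <= cl(G) + 1 < q, and
   - G' -v-> (2_r): an r-colouring of G' extends to G by giving every vertex
     of A the colour of the apex; a monochromatic edge of G cannot lie inside
     A, and if it leaves A it becomes a monochromatic edge through the apex.
   Hence |V(G)| - alpha(G) + 1 = |V(G')| >= F_v(2_r; q). *)

Lemma Fv_le (r q n : nat) : hasHv r q n -> Fv r q <= n.
Proof.
move=> Hn; rewrite /Fv; case: excluded_middle_informative => [ex|noex].
  case: ex_minnP => m _; apply.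
  by rewrite /hasHvb; case: excluded_middle_informative.
exfalso; apply: noex; exists n.
by rewrite /hasHvb; case: excluded_middle_informative.
Qed.

Lemma alpha_attained (T : finType) (e : rel T) :
  exists2 A : {set T}, is_indep e A & alpha e = #|A|.
Proof.
have some_indep : 0 < #|[pred A : {set T} | is_indep e A]|.
  by apply/card_gt0P; exists set0; rewrite inE; apply/forallP => x; rewrite inE.
have [A HA HAmax] := eq_bigmax_cond (fun A : {set T} => #|A|) some_indep.
by exists A; rewrite // /alpha HAmax.
Qed.

Section Pullback.
Variables (T T' : finType) (f : T' -> T) (e : rel T).

(* The graph on T' whose edges are the pairs mapped by f onto edges of e;
   for an injective f this is (a copy of) an induced subgraph. *)
Definition pullback : rel T' := fun x y => e (f x) (f y).

Lemma pullback_simple : simple_graph e -> simple_graph pullback.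
Proof. by case=> e_sym e_irr; split=> [x y|x]; rewrite /pullback (e_sym, e_irr). Qed.

(* Cliques are carried injectively to cliques, so cl does not increase. *)
Lemma pullback_clique : injective f -> clique_number pullback <= clique_number e.
Proof.
move=> f_inj; apply/bigmax_leqP => B cliqueB.
have cliquefB : is_clique e (f @: B).
  apply/forallP => fx; apply/implyP => /imsetP [x Bx ->].
  apply/forallP => fy; apply/implyP => /imsetP [y By ->].
  apply/implyP => fx_ne_fy.
  have /implyP/(_ Bx)/forallP/(_ y)/implyP/(_ By)/implyP := forallP cliqueB x.
  by apply; apply: contra fx_ne_fy => /eqP ->.
by rewrite -(card_imset B f_inj); apply: leq_bigmax_cond.
Qed.

End Pullback.

Lemma inHv_hasHv (r q : nat) (T : finType) (e : rel T) :
  inHv r q e -> hasHv r q #|T|.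
Proof.
case=> simple_e [arrow_e cl_e].
exists (pullback (@enum_val T _) e); split; [exact: pullback_simple|split].
- move=> c; have [x [y [exy cxy]]] := arrow_e (fun x => c (enum_rank x)).
  by exists (enum_rank x), (enum_rank y); rewrite /pullback !enum_rankK.
- exact: leq_ltn_trans (pullback_clique _ enum_val_inj) cl_e.
Qed.

Section Cone.
Variables (S : finType) (e : rel S).

Definition cone (u v : option S) : bool :=
  match u, v with
  | Some x, Some y => e x y
  | None, Some _ | Some _, None => true
  | None, None => false
  end.

Lemma cone_simple : simple_graph e -> simple_graph cone.
Proof. by case=> e_sym e_irr; split=> [[x|] [y|]|[x|]] //=; rewrite (e_sym, e_irr). Qed.

(* A clique of the cone is the apex plus a clique of e, so cl grows by <= 1. *)
Lemma cone_clique : clique_number cone <= (clique_number e).+1.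
Proof.
apply/bigmax_leqP => B cliqueB.
pose C := [set x | Some x \in B].
have BC : B :\ None = Some @: C.
  apply/setP => -[x|]; rewrite !inE /=; last by apply/esym/imsetP => -[].
  by apply/idP/imsetP => [Bx|[y]]; [exists x; rewrite ?inE | rewrite inE => By [->]].
have cliqueC : is_clique e C.
  apply/forallP => x; apply/implyP; rewrite inE => Bx.
  apply/forallP => y; apply/implyP; rewrite inE => By.
  apply/implyP => x_ne_y.
  have /implyP/(_ Bx)/forallP/(_ (Some y))/implyP/(_ By)/implyP := forallP cliqueB (Some x).
  by apply; apply: contra x_ne_y => /eqP [->].
rewrite (cardsD1 None B) BC (card_imset _ Some_inj) -add1n.
by apply: leq_add (leq_b1 _) _; apply: leq_bigmax_cond.
Qed.

End Cone.

Section DeleteIndependent.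
Variables (T : finType) (e : rel T) (A : {set T}).

Definition outside := {x : T | x \notin A}.
Definition delete : rel outside := pullback val e.

Lemma card_outside : #|{: outside}| + #|A| = #|T|.
Proof. by rewrite card_sig addnC -(cardC A); congr (_ + _); apply: eq_card. Qed.

(* Colouring A with the apex colour turns a colouring of the cone over G - A
   into a colouring of G whose monochromatic edges come from the cone. *)
Lemma cone_delete_varrow (r : nat) :
  is_indep e A -> varrow r e -> varrow r (cone delete).
Proof.
move=> indepA arrow_e c; pose lift (x : T) : option outside := insub x.
have [x [y [exy cxy]]] := arrow_e (fun x => c (lift x)).
exists (lift x), (lift y); split=> //; rewrite /lift.
case: insubP => [x' _ xx'|]; case: insubP => [y' _ yy'|] //=.
  by rewrite /delete /pullback xx' yy'.
rewrite !negbK => Ay Ax.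
by have /implyP/(_ Ax)/forallP/(_ y)/implyP/(_ Ay) := forallP indepA x; rewrite exy.
Qed.

End DeleteIndependent.
Arguments delete {T} e A.

Theorem lemma2p1 (r q : nat) (hr : 1 <= r) (hq : 4 <= q)
  (T : finType) (e : rel T)
  (HG : inHv r q.-1 e) (Hmin : #|T| = Fv r q.-1) :
  Fv r q + alpha e - 1 <= Fv r q.-1.
Proof.
have [A indepA ->] := alpha_attained e.
have [simple_e [arrow_e cl_e]] := HG.
have cone_in_Hv : inHv r q (cone (delete e A)).
  split; [exact/cone_simple/pullback_simple|split].
  - exact: cone_delete_varrow.
  - apply: leq_ltn_trans (cone_clique _) _.
    rewrite -(ltn_predK hq) ltnS.
    exact: leq_ltn_trans (pullback_clique _ val_inj) cl_e.
have := Fv_le (inHv_hasHv cone_in_Hv).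
rewrite card_option -Hmin -(card_outside A) => HF.
by rewrite leq_subLR addnA add1n leq_add2r.
Qed.
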